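(* A functor $f\colon A\to B$ between small categories is injective on objects if and only if it is isomorphic, in the arrow category $\mathbf{Cat}^{\mathbf{2}}$, to $\Pi(g)$ for some monomorphism $g$ of simplicial sets.
   Context: $\Pi\colon\mathbf{SSet}\to\mathbf{Cat}$ denotes the left adjoint of the nerve functor $N\colon\mathbf{Cat}\to\mathbf{SSet}$ (sending a simplicial set to its fundamental/classifying category). $\mathbf{Cat}^{\mathbf{2}}$ is the category whose objects are functors and whose morphisms are commutative squares. *)

From mathcomp Require Import all_boot.
Set Implicit Arguments. Unset Strict Implicit. Unset Printing Implicit Defensive.

Record Cat := MkCat {
  ob : Type;
  hom : ob -> ob -> Type;
  idc : forall a, hom a a;
  cmp : forall a b c, hom b c -> hom a b -> hom a c;
  cmp1l : forall a b (f : hom a b), cmp (idc b) f = f;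
  cmp1r : forall a b (f : hom a b), cmp f (idc a) = f;
  cmpA : forall a b c d (f : hom a b) (g : hom b c) (h : hom c d),
      cmp h (cmp g f) = cmp (cmp h g) f }.
Arguments idc {c0} a : rename.
Arguments cmp {c0 a b c} _ _ : rename.

Record Functor (C D : Cat) := MkFunctor {
  fob : ob C -> ob D;
  fhom : forall a b, hom a b -> hom (fob a) (fob b);
  fhom_id : forall a, fhom (idc a) = idc (fob a);
  fhom_cmp : forall a b c (g : hom b c) (f : hom a b),
      fhom (cmp g f) = cmp (fhom g) (fhom f) }.
Arguments fob {C D} f a : rename.
Arguments fhom {C D} f {a b} _ : rename.

Definition Fid (C : Cat) : Functor C C :=
  @MkFunctor C C (fun a => a) (fun a b f => f) (fun a => erefl) (fun _ _ _ _ _ => erefl).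

Lemma Fcomp_id (C D E : Cat) (G : Functor D E) (F : Functor C D) (a : ob C) :
  fhom G (fhom F (idc a)) = idc (fob G (fob F a)).
Proof. by rewrite !fhom_id. Qed.

Lemma Fcomp_cmp (C D E : Cat) (G : Functor D E) (F : Functor C D)
  (a b c : ob C) (g : hom b c) (f : hom a b) :
  fhom G (fhom F (cmp g f)) = cmp (fhom G (fhom F g)) (fhom G (fhom F f)).
Proof. by rewrite !fhom_cmp. Qed.

Definition Fcomp (C D E : Cat) (G : Functor D E) (F : Functor C D) : Functor C E :=
  @MkFunctor C E (fun a => fob G (fob F a)) (fun a b f => fhom G (fhom F f))
    (Fcomp_id G F) (Fcomp_cmp G F).

(** The ordinal [n] = {0 < 1 < ... < n} as a (poset) category. *)
Definition ordcat (n : nat) : Cat.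
Proof.
refine (@MkCat 'I_n.+1 (fun i j => (i <= j)%N) (fun i => leqnn i)
          (fun a b c g f => leq_trans f g) _ _ _);
  by move=> *; apply: eq_irrelevance.
Defined.

Definition Dhom (m n : nat) :=
  {f : 'I_m.+1 -> 'I_n.+1 | forall i j : 'I_m.+1, (i <= j)%N -> (f i <= f j)%N}.

Definition did (n : nat) : Dhom n n := @exist _ (fun f : 'I_n.+1 -> 'I_n.+1 => forall i j : 'I_n.+1, (i <= j)%N -> (f i <= f j)%N)
    (fun i => i) (fun i j h => h).

Definition dcomp (m n p : nat) (g : Dhom n p) (f : Dhom m n) : Dhom m p :=
  @exist _ (fun h : 'I_m.+1 -> 'I_p.+1 => forall i j : 'I_m.+1, (i <= j)%N -> (h i <= h j)%N)
    (fun i => sval g (sval f i))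
    (fun i j h => proj2_sig g _ _ (proj2_sig f i j h)).

Definition ordfun (m n : nat) (d : Dhom m n) : Functor (ordcat m) (ordcat n).
Proof.
refine (@MkFunctor (ordcat m) (ordcat n) (sval d)
          (fun a b h => proj2_sig d a b h) _ _);
  by move=> *; apply: eq_irrelevance.
Defined.

Record SSet := MkSSet {
  sx : nat -> Type;
  sact : forall m n, Dhom m n -> sx n -> sx m;
  sact_id : forall n (x : sx n), sact (did n) x = x;
  sact_comp : forall m n p (f : Dhom m n) (g : Dhom n p) (x : sx p),
      sact (dcomp g f) x = sact f (sact g x) }.
Arguments sact {s m n} d x : rename.

Record SSetMor (X Y : SSet) := MkSSetMor {
  smap : forall n, sx X n -> sx Y n;
  snat : forall m n (d : Dhom m n) (x : sx X n),
      smap (sact d x) = sact d (smap x) }.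
Arguments smap {X Y} s {n} x : rename.

Lemma Scomp_nat (X Y Z : SSet) (g : SSetMor Y Z) (h : SSetMor X Y)
  m n (d : Dhom m n) (x : sx X n) :
  smap g (smap h (sact d x)) = sact d (smap g (smap h x)).
Proof. by rewrite !snat. Qed.

Definition Scomp (X Y Z : SSet) (g : SSetMor Y Z) (h : SSetMor X Y) : SSetMor X Z :=
  @MkSSetMor X Z (fun n x => smap g (smap h x)) (Scomp_nat g h).

Definition mono (X Y : SSet) (g : SSetMor X Y) : Prop :=
  forall (Z : SSet) (h k : SSetMor Z X), Scomp g h = Scomp g k -> h = k.

(** A map of simplicial sets X -> N(C), where N(C)_n = functors [n] -> C and
    Delta acts on N(C) by precomposition. *)
Record ToNerve (X : SSet) (C : Cat) := MkToNerve {
  tn : forall n, sx X n -> Functor (ordcat n) C;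
  tn_nat : forall m n (d : Dhom m n) (x : sx X n),
      tn (sact d x) = Fcomp (tn x) (ordfun d) }.
Arguments tn {X C} t {n} x : rename.

(** [eta : X -> N(C)] is a universal arrow from X to the nerve functor, i.e.
    (C, eta) is Pi(X) with its unit (Pi = left adjoint of N). *)
Definition fundamental (X : SSet) (C : Cat) (eta : ToNerve X C) : Prop :=
  forall (D : Cat) (phi : ToNerve X D),
    exists! F : Functor C D, forall n (x : sx X n), tn phi x = Fcomp F (tn eta x).

Definition arrow_iso (A B C D : Cat) (f : Functor A B) (h : Functor C D) : Prop :=
  exists (u : Functor A C) (v : Functor B D) (u' : Functor C A) (v' : Functor D B),
    [/\ Fcomp v f = Fcomp h u, Fcomp v' h = Fcomp f u',
        Fcomp u' u = Fid A /\ Fcomp u u' = Fid C &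
        Fcomp v' v = Fid B /\ Fcomp v v' = Fid D].

From mathcomp Require Import all_boot.
From Stdlib Require Import FunctionalExtensionality ProofIrrelevance PropExtensionality.
Set Implicit Arguments. Unset Strict Implicit. Unset Printing Implicit Defensive.

(* Objects of Pi(X) are the vertices of X, and a monomorphism of simplicial
   sets is injective on vertices, so Pi(g) is injective on objects; this
   property transfers along isomorphisms in Cat^2.  Conversely, both Pi(g)
   and g are built from "labelled nerves": simplices of the nerve of C whose
   arrows carry labels lying over them.  If every arrow of C has a label, the
   2-simplices witnessing composition force Pi of the labelled nerve to be C.
   For f injective on objects, let Y be the nerve of B with an extra edge over
   f(m) for each arrow m of A, and X the nerve of A; relabelling along f is an
   injective map X -> Y, hence mono, and Pi of it is f itself. *)

Section Arrows.
Variable C : Cat.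

Definition Arr := {x : ob C & {y : ob C & hom x y}}.
Definition arr (x y : ob C) (a : hom x y) : Arr := existT _ x (existT _ y a).
Definition dom (m : Arr) : ob C := projT1 m.
Definition cod (m : Arr) : ob C := projT1 (projT2 m).
Definition id_arr (c : ob C) : Arr := arr (idc c).

Definition composite (f g h : Arr) : Prop :=
  exists x y z (a : hom x y) (b : hom y z),
    [/\ f = arr a, g = arr b & h = arr (cmp b a)].

Lemma arrE (m : Arr) : m = arr (projT2 (projT2 m)).
Proof. by case: m => x [y a]. Qed.

Lemma arr_inj (x y : ob C) (a b : hom x y) : arr a = arr b -> a = b.
Proof. by move=> /(inj_pair2 _ _ _ _ _) /(inj_pair2 _ _ _ _ _). Qed.

Lemma arr_endpoints (x y x' y' : ob C) (a : hom x y) (b : hom x' y') :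
  arr a = arr b -> x = x' /\ y = y'.
Proof. by move=> E; split; [apply: (f_equal dom E) | apply: (f_equal cod E)]. Qed.

Lemma composite_arr (x y z : ob C) (a : hom x y) (b : hom y z) :
  composite (arr a) (arr b) (arr (cmp b a)).
Proof. by exists x, y, z, a, b. Qed.

Lemma compositeE (x y z : ob C) (a : hom x y) (b : hom y z) (c : hom x z) :
  composite (arr a) (arr b) (arr c) -> c = cmp b a.
Proof.
case=> x' [y' [z' [a' [b' [Ea Eb Ec]]]]].
case: (arr_endpoints Ea) => ? ?; subst x' y'; move/arr_inj: Ea => ?; subst a'.
case: (arr_endpoints Eb) => _ ?; subst z'; move/arr_inj: Eb => ?; subst b'.
exact: arr_inj Ec.
Qed.

Lemma composite_endpoints (f g h : Arr) : composite f g h ->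
  [/\ dom h = dom f, cod h = cod g & cod f = dom g].
Proof. by case=> x [y [z [a [b [-> -> ->]]]]]. Qed.

Lemma composite_idl (f : Arr) (x : ob C) : dom f = x -> composite (id_arr x) f f.
Proof. by case: f => ? [y a] /= <-; have := composite_arr (idc _) a; rewrite cmp1r. Qed.

Lemma composite_idr (f : Arr) (y : ob C) : cod f = y -> composite f (id_arr y) f.
Proof. by case: f => x [? a] /= <-; have := composite_arr a (idc _); rewrite cmp1l. Qed.

Lemma composite_idr_inv (f h : Arr) (z : ob C) : composite f (id_arr z) h -> h = f.
Proof.
case=> x [y [z' [a [b [-> Eb ->]]]]].
case: (arr_endpoints Eb) => ? ?; subst y z'; move/arr_inj: Eb => ?; subst b.
by rewrite cmp1l.
Qed.
End Arrows.
Arguments arr {C x y} a.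

Definition farr (C D : Cat) (F : Functor C D) (m : Arr C) : Arr D :=
  arr (fhom F (projT2 (projT2 m))).

Lemma farr_arr (C D : Cat) (F : Functor C D) (x y : ob C) (a : hom x y) :
  farr F (arr a) = arr (fhom F a).
Proof. by []. Qed.

Lemma farr_id_arr (C D : Cat) (F : Functor C D) (x : ob C) :
  farr F (id_arr x) = id_arr (fob F x).
Proof. by rewrite /farr /= fhom_id. Qed.

Lemma farr_composite (C D : Cat) (F : Functor C D) (f g h : Arr C) :
  composite f g h -> composite (farr F f) (farr F g) (farr F h).
Proof.
by case=> x [y [z [a [b [-> -> ->]]]]]; rewrite !farr_arr fhom_cmp; apply: composite_arr.
Qed.

Lemma farr_Fcomp (C D E : Cat) (G : Functor D E) (F : Functor C D) (m : Arr C) :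
  farr (Fcomp G F) m = farr G (farr F m).
Proof. by case: m => x [y a]. Qed.

Lemma eq_functor (C D : Cat) (F G : Functor C D) : farr F =1 farr G -> F = G.
Proof.
move=> FG; have eq_ob x : fob F x = fob G x := f_equal (@dom D) (FG (id_arr x)).
case: F G FG eq_ob => fo fh fh1 fhM [go gh gh1 ghM] /= FG eq_ob.
have ? : fo = go by apply: functional_extensionality; apply: eq_ob.
subst go; have ? : fh = gh.
  do 2!apply: functional_extensionality_dep => ?.
  by apply: functional_extensionality => a; apply: arr_inj (FG (arr a)).
by subst gh; rewrite (proof_irrelevance _ fh1 gh1) (proof_irrelevance _ fhM ghM).
Qed.

Section FunctorOfArr.
Variables (C D : Cat) (fo : ob C -> ob D) (fm : Arr C -> Arr D).
Hypothesis fm_dom : forall m, dom (fm m) = fo (dom m).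
Hypothesis fm_cod : forall m, cod (fm m) = fo (cod m).
Hypothesis fm_id : forall c, fm (id_arr c) = id_arr (fo c).
Hypothesis fm_comp : forall f g h, composite f g h -> composite (fm f) (fm g) (fm h).

Definition cast_hom (x x' y y' : ob D) (ex : x = x') (ey : y = y') (a : hom x y) : hom x' y' :=
  eq_rect y (hom x') (eq_rect x (fun z => hom z y) a x' ex) y' ey.

Lemma arr_cast_hom (x x' y y' : ob D) (ex : x = x') (ey : y = y') (a : hom x y) :
  arr (cast_hom ex ey a) = arr a.
Proof. by case: x' / ex; case: y' / ey. Qed.

Definition fhom_of_arr (a b : ob C) (f : hom a b) : hom (fo a) (fo b) :=
  cast_hom (fm_dom (arr f)) (fm_cod (arr f)) (projT2 (projT2 (fm (arr f)))).

Lemma arr_fhom_of_arr (a b : ob C) (f : hom a b) : arr (fhom_of_arr f) = fm (arr f).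
Proof. by rewrite /fhom_of_arr arr_cast_hom -arrE. Qed.

Lemma fhom_of_arr_id (a : ob C) : fhom_of_arr (idc a) = idc (fo a).
Proof. by apply: arr_inj; rewrite arr_fhom_of_arr; apply: fm_id. Qed.

Lemma fhom_of_arr_cmp (a b c : ob C) (g : hom b c) (f : hom a b) :
  fhom_of_arr (cmp g f) = cmp (fhom_of_arr g) (fhom_of_arr f).
Proof. by apply: compositeE; rewrite !arr_fhom_of_arr; apply/fm_comp/composite_arr. Qed.

Definition functor_of_arr : Functor C D := MkFunctor fhom_of_arr_id fhom_of_arr_cmp.

Lemma farr_functor_of_arr : farr functor_of_arr =1 fm.
Proof. by case=> a [b f]; apply: arr_fhom_of_arr. Qed.

End FunctorOfArr.

Lemma eq_Dhom (m n : nat) (d d' : Dhom m n) : sval d =1 sval d' -> d = d'.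
Proof.
case: d d' => d dP [d' d'P] /= /functional_extensionality dd'.
by subst d'; rewrite (proof_irrelevance _ dP d'P).
Qed.

Lemma Dhom00 (d : Dhom 0 0) : d = did 0.
Proof. by apply: eq_Dhom => i; rewrite !ord1. Qed.

Definition mkDhom (m n : nat) (f : 'I_m.+1 -> 'I_n.+1)
  (fP : forall i j : 'I_m.+1, (i <= j)%N -> (f i <= f j)%N) : Dhom m n :=
  exist (fun f : 'I_m.+1 -> 'I_n.+1 => forall i j : 'I_m.+1, (i <= j)%N -> (f i <= f j)%N) f fP.

Definition vertex_map (n : nat) (i : 'I_n.+1) : Dhom 0 n :=
  mkDhom (fun _ _ _ => leqnn i).

Definition const_map (n : nat) : Dhom n 0 := mkDhom (fun _ _ _ => leqnn (@ord0 0)).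

Lemma edge_map_homo (n : nat) (i j : 'I_n.+1) (ij : (i <= j)%N) (a b : 'I_2) :
  (a <= b)%N -> ((if a == ord0 then i else j) <= (if b == ord0 then i else j))%N.
Proof. by case: a b => [[|[|?]] ?] [[|[|?]] ?]. Qed.

Definition edge_map (n : nat) (i j : 'I_n.+1) (ij : (i <= j)%N) : Dhom 1 n :=
  mkDhom (edge_map_homo ij).

Section LabelledNerve.
Variables (C : Cat) (E : Type) (pid : ob C -> E) (r : E -> Arr C).

(* Entries below the diagonal are junk, pinned to the diagonal so that a
   simplex is determined by its entries [e i j] with [i <= j]. *)
Definition lsimplex_axiom (n : nat) (e : 'I_n.+1 -> 'I_n.+1 -> E) : Prop :=
  [/\ forall i j : 'I_n.+1, (j < i)%N -> e i j = e j j,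
      forall i, exists c, e i i = pid c &
      forall i j k : 'I_n.+1, (i <= j)%N -> (j <= k)%N ->
        composite (r (e i j)) (r (e j k)) (r (e i k))].

Definition lsimplex (n : nat) := {e | @lsimplex_axiom n e}.

Lemma lsimplex_eq (n : nat) (x y : lsimplex n) :
  (forall i j : 'I_n.+1, (i <= j)%N -> sval x i j = sval y i j) -> x = y.
Proof.
case: x y => e eP [e' e'P] /= ee'.
have ? : e = e'.
  apply: functional_extensionality => i; apply: functional_extensionality => j.
  case: eP e'P => [low _ _] [low' _ _].
  by case: (leqP i j) => [/ee'//|ji]; rewrite low // low' // ee'.
by subst e'; rewrite (proof_irrelevance _ eP e'P).
Qed.

Lemma lsact_axiom (m n : nat) (d : Dhom m n) (x : lsimplex n) :
  lsimplex_axiom (fun i j => sval x (sval d i) (sval d j)).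
Proof.
case: x => e [low diag tri] /=; split.
- move=> i j ji; have := proj2_sig d j i (ltnW ji).
  by rewrite leq_eqVlt => /orP [/eqP/val_inj -> | /low].
- by move=> i; apply: diag.
- by move=> i j k ij jk; apply: tri; apply: (proj2_sig d).
Qed.

Definition lsact (m n : nat) (d : Dhom m n) (x : lsimplex n) : lsimplex m :=
  exist _ _ (lsact_axiom d x).

Lemma lsact_id (n : nat) (x : lsimplex n) : lsact (did n) x = x.
Proof. exact: lsimplex_eq. Qed.

Lemma lsact_comp (m n p : nat) (d : Dhom m n) (d' : Dhom n p) (x : lsimplex p) :
  lsact (dcomp d' d) x = lsact d (lsact d' x).
Proof. exact: lsimplex_eq. Qed.

Definition lnerve : SSet := MkSSet lsact_id lsact_comp.

Hypothesis r_pid : forall c, r (pid c) = id_arr c.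

Lemma lsimplex_diag (n : nat) (x : lsimplex n) (i : 'I_n.+1) :
  sval x i i = pid (dom (r (sval x i i))).
Proof. by case: (proj2_sig x) => _ /(_ i) [c ->] _; rewrite r_pid. Qed.

Section Unit.
Variables (n : nat) (x : lsimplex n).

Let unit_ob (i : 'I_n.+1) : ob C := dom (r (sval x i i)).
Let unit_arr (m : Arr (ordcat n)) : Arr C := r (sval x (dom m) (cod m)).

Let unit_dom m : dom (unit_arr m) = unit_ob (dom m).
Proof.
case: m => i [j ij]; case: (proj2_sig x) => _ _ /(_ i i j (leqnn i) ij).
by case/composite_endpoints.
Qed.

Let unit_cod m : cod (unit_arr m) = unit_ob (cod m).
Proof.
case: m => i [j ij]; case: (proj2_sig x) => _ _ /(_ i j j ij (leqnn j)).
by case/composite_endpoints.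
Qed.

Let unit_id i : unit_arr (id_arr i) = id_arr (unit_ob i).
Proof. by rewrite /unit_arr /= lsimplex_diag r_pid. Qed.

Let unit_comp f g h : composite f g h -> composite (unit_arr f) (unit_arr g) (unit_arr h).
Proof.
case=> i [j [k [ij [jk [-> -> ->]]]]]; case: (proj2_sig x) => _ _ tri.
exact: tri.
Qed.

Definition lsimplex_functor : Functor (ordcat n) C :=
  functor_of_arr unit_dom unit_cod unit_id unit_comp.

Lemma farr_lsimplex_functor (i j : 'I_n.+1) (ij : (i <= j)%N) :
  farr lsimplex_functor (@arr (ordcat n) i j ij) = r (sval x i j).
Proof. exact: farr_functor_of_arr. Qed.

End Unit.

Lemma lsimplex_functor_nat (m n : nat) (d : Dhom m n) (x : lsimplex n) :
  lsimplex_functor (lsact d x) = Fcomp (lsimplex_functor x) (ordfun d).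
Proof. by apply: eq_functor => -[i [j ij]]; rewrite farr_Fcomp !farr_lsimplex_functor. Qed.

Definition lnerve_unit : ToNerve lnerve C :=
  @MkToNerve lnerve C (fun n x => lsimplex_functor x) lsimplex_functor_nat.

Lemma vertex_axiom (c : ob C) : @lsimplex_axiom 0 (fun _ _ => pid c).
Proof. by split=> // [|*]; [exists c | rewrite r_pid; apply: composite_idl]. Qed.

Definition vertex (c : ob C) : lsimplex 0 := exist _ _ (vertex_axiom c).

Definition edge_entry (u : E) (i j : 'I_2) : E :=
  if (i < j)%N then u else if j == ord0 then pid (dom (r u)) else pid (cod (r u)).

Lemma edge_axiom (u : E) : lsimplex_axiom (edge_entry u).
Proof.
rewrite /edge_entry; split.
- by case=> [[|[|?]] ?] [[|[|?]] ?].
- by case=> [[|[|?]] ?] //=; eexists.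
- case=> [[|[|?]] ?] [[|[|?]] ?] [[|[|?]] ?] //= _ _; rewrite ?r_pid;
    by [apply: composite_idl | apply: composite_idr].
Qed.

Definition edge (u : E) : lsimplex 1 := exist _ _ (edge_axiom u).

Section Triangle.
Variables (u w h : E).
Hypothesis uwh : composite (r u) (r w) (r h).

Definition triangle_entry (i j : 'I_3) : E :=
  if (i < j)%N then (if i == ord0 then (if j == ord_max then h else u) else w)
  else if j == ord0 then pid (dom (r u))
  else if j == ord_max then pid (cod (r w)) else pid (cod (r u)).

Lemma triangle_axiom : lsimplex_axiom triangle_entry.
Proof.
have [dom_h cod_h cod_u] := composite_endpoints uwh.
rewrite /triangle_entry; split.
- by case=> [[|[|[|?]]] ?] [[|[|[|?]]] ?].
- by case=> [[|[|[|?]]] ?] //=; eexists.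
- case=> [[|[|[|?]]] ?] [[|[|[|?]]] ?] [[|[|[|?]]] ?] //= _ _; rewrite ?r_pid;
    first [apply: composite_idl | apply: composite_idr]; by rewrite ?dom_h ?cod_h ?cod_u.
Qed.

Definition triangle : lsimplex 2 := exist _ _ triangle_axiom.

End Triangle.

Lemma edge_face (n : nat) (x : lsimplex n) (i j : 'I_n.+1) (ij : (i <= j)%N) :
  lsact (edge_map ij) x = edge (sval x i j).
Proof.
apply: lsimplex_eq; case: (proj2_sig x) => _ _ tri.
case=> [[|[|?]] ?] [[|[|?]] ?] //= _; rewrite /edge_entry /= lsimplex_diag.
- by have [-> _ _] := composite_endpoints (tri i i j (leqnn i) ij).
- by have [_ _ ->] := composite_endpoints (tri i j j ij (leqnn j)).
Qed.

Lemma edge_vertex0 (u : E) : lsact (vertex_map ord0) (edge u) = vertex (dom (r u)).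
Proof. by apply: lsimplex_eq => -[[|?] ?] [[|?] ?]. Qed.

Lemma edge_vertex1 (u : E) : lsact (vertex_map ord_max) (edge u) = vertex (cod (r u)).
Proof. by apply: lsimplex_eq => -[[|?] ?] [[|?] ?]. Qed.

Lemma edge_pid (c : ob C) : edge (pid c) = lsact (const_map 1) (vertex c).
Proof.
by apply: lsimplex_eq => -[[|[|?]] ?] [[|[|?]] ?] //= _; rewrite /edge_entry /= r_pid.
Qed.

End LabelledNerve.

Section LabelledNerveLift.
Variables (C : Cat) (E : Type) (pid : ob C -> E) (r : E -> Arr C).
Hypothesis r_pid : forall c, r (pid c) = id_arr c.
Variables (D : Cat) (phi : ToNerve (lnerve pid r) D).

Let e01 : Arr (ordcat 1) := @arr (ordcat 1) ord0 ord_max isT.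

Definition phi_vertex (c : ob C) : ob D := fob (tn phi (vertex r_pid c)) ord0.
Definition phi_edge (u : E) : Arr D := farr (tn phi (edge r_pid u)) e01.

Lemma farr_phi (n : nat) (x : lsimplex pid r n) (i j : 'I_n.+1) (ij : (i <= j)%N) :
  farr (tn phi x) (@arr (ordcat n) i j ij) = phi_edge (sval x i j).
Proof.
rewrite /phi_edge -edge_face (tn_nat phi) farr_Fcomp.
by congr (farr _ (@arr (ordcat n) i j _)); apply: eq_irrelevance.
Qed.

Lemma phi_edge_dom (u : E) : dom (phi_edge u) = phi_vertex (dom (r u)).
Proof. by rewrite /phi_vertex -edge_vertex0 (tn_nat phi). Qed.

Lemma phi_edge_cod (u : E) : cod (phi_edge u) = phi_vertex (cod (r u)).
Proof. by rewrite /phi_vertex -edge_vertex1 (tn_nat phi). Qed.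

Lemma phi_edge_pid (c : ob C) : phi_edge (pid c) = id_arr (phi_vertex c).
Proof.
rewrite /phi_edge edge_pid (tn_nat phi) farr_Fcomp -farr_id_arr.
by congr farr; apply: (congr1 arr); apply: eq_irrelevance.
Qed.

Lemma phi_edge_composite (u w h : E) : composite (r u) (r w) (r h) ->
  composite (phi_edge u) (phi_edge w) (phi_edge h).
Proof.
move=> uwh; pose t := triangle r_pid uwh.
have := farr_composite (tn phi t)
  (@composite_arr (ordcat 2) ord0 (Ordinal (isT : 1 < 3)) ord_max isT isT).
by rewrite !farr_phi.
Qed.

Lemma eq_phi_edge (u u' : E) : r u = r u' -> phi_edge u = phi_edge u'.
Proof.
move=> uu'; have : composite (r u) (r (pid (cod (r u)))) (r u').
  by rewrite r_pid -uu'; apply: composite_idr.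
by move/phi_edge_composite; rewrite phi_edge_pid => /composite_idr_inv.
Qed.

Variables (s : Arr C -> E) (r_s : cancel s r).

Let lift_dom (m : Arr C) : dom (phi_edge (s m)) = phi_vertex (dom m).
Proof. by rewrite phi_edge_dom r_s. Qed.

Let lift_cod (m : Arr C) : cod (phi_edge (s m)) = phi_vertex (cod m).
Proof. by rewrite phi_edge_cod r_s. Qed.

Let lift_id (c : ob C) : phi_edge (s (id_arr c)) = id_arr (phi_vertex c).
Proof. by rewrite -phi_edge_pid; apply: eq_phi_edge; rewrite r_s r_pid. Qed.

Let lift_comp (f g h : Arr C) : composite f g h ->
  composite (phi_edge (s f)) (phi_edge (s g)) (phi_edge (s h)).
Proof. by rewrite -{1}(r_s f) -{1}(r_s g) -{1}(r_s h); apply: phi_edge_composite. Qed.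

Definition lnerve_lift : Functor C D := functor_of_arr lift_dom lift_cod lift_id lift_comp.

Lemma lnerve_liftP (n : nat) (x : lsimplex pid r n) :
  tn phi x = Fcomp lnerve_lift (tn (lnerve_unit r_pid) x).
Proof.
apply: eq_functor => -[i [j ij]] /=.
rewrite farr_Fcomp farr_lsimplex_functor farr_functor_of_arr farr_phi.
by apply: eq_phi_edge; rewrite r_s.
Qed.

Lemma lnerve_lift_unique (G : Functor C D) :
  (forall n (x : lsimplex pid r n), tn phi x = Fcomp G (tn (lnerve_unit r_pid) x)) ->
  G = lnerve_lift.
Proof.
move=> phiG; apply: eq_functor => m; rewrite farr_functor_of_arr /phi_edge phiG.
by rewrite farr_Fcomp /= farr_lsimplex_functor /= r_s.
Qed.

End LabelledNerveLift.

Lemma lnerve_fundamental (C : Cat) (E : Type) (pid : ob C -> E) (r : E -> Arr C)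
    (r_pid : forall c, r (pid c) = id_arr c) (s : Arr C -> E) :
  cancel s r -> fundamental (lnerve_unit r_pid).
Proof.
move=> r_s D phi; exists (lnerve_lift r_pid phi r_s); split; first exact: lnerve_liftP.
by move=> G phiG; symmetry; apply: lnerve_lift_unique.
Qed.

Lemma eq_ssetmor (X Y : SSet) (g h : SSetMor X Y) :
  (forall n (x : sx X n), smap g x = smap h x) -> g = h.
Proof.
case: g h => g gP [h hP] /= gh.
have ? : g = h.
  by apply: functional_extensionality_dep => n; apply: functional_extensionality.
by subst h; rewrite (proof_irrelevance _ gP hP).
Qed.

Section LabelledNerveMap.
Variables (C C' : Cat) (F : Functor C C') (E E' : Type).
Variables (pid : ob C -> E) (r : E -> Arr C) (pid' : ob C' -> E') (r' : E' -> Arr C').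
Variable l : E -> E'.
Hypothesis l_pid : forall c, l (pid c) = pid' (fob F c).
Hypothesis r'_l : forall e, r' (l e) = farr F (r e).

Lemma lmap_axiom (n : nat) (x : lsimplex pid r n) :
  lsimplex_axiom pid' r' (fun i j => l (sval x i j)).
Proof.
case: (proj2_sig x) => low diag tri; split.
- by move=> i j /low ->.
- by move=> i; have [c ->] := diag i; exists (fob F c); apply: l_pid.
- by move=> i j k ij jk; rewrite !r'_l; apply/farr_composite/tri.
Qed.

Definition lmap (n : nat) (x : lsimplex pid r n) : lsimplex pid' r' n :=
  exist _ _ (lmap_axiom x).

Lemma lmap_nat (m n : nat) (d : Dhom m n) (x : lsimplex pid r n) :
  lmap (lsact d x) = lsact d (lmap x).
Proof. exact: lsimplex_eq. Qed.

Definition lnerve_map : SSetMor (lnerve pid r) (lnerve pid' r') :=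
  @MkSSetMor (lnerve pid r) (lnerve pid' r') lmap lmap_nat.

Lemma lnerve_map_mono : injective l -> mono lnerve_map.
Proof.
move=> l_inj Z g h gh; apply: eq_ssetmor => n z.
have /= := f_equal (fun k : SSetMor Z (lnerve pid' r') => smap k z) gh.
move=> lgh; apply: lsimplex_eq => i j _; apply: l_inj.
exact: (f_equal (fun y : lsimplex pid' r' n => sval y i j) lgh).
Qed.

Lemma lnerve_map_unit (r_pid : forall c, r (pid c) = id_arr c)
    (r'_pid' : forall c, r' (pid' c) = id_arr c) (n : nat) (x : lsimplex pid r n) :
  Fcomp F (tn (lnerve_unit r_pid) x) = tn (lnerve_unit r'_pid') (smap lnerve_map x).
Proof.
by apply: eq_functor => -[i [j ij]]; rewrite farr_Fcomp /= !farr_lsimplex_functor /= r'_l.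
Qed.

End LabelledNerveMap.

Definition indiscrete (T : Type) : Cat.
Proof.
by refine (@MkCat T (fun _ _ => unit) (fun _ => tt) (fun _ _ _ _ _ => tt) _ _ _) => // ? ? [].
Defined.

Definition to_indiscrete (C : Cat) (T : Type) (o : ob C -> T) : Functor C (indiscrete T) :=
  @MkFunctor C (indiscrete T) o (fun _ _ _ => tt) (fun _ => erefl) (fun _ _ _ _ _ => erefl).

Lemma eq_to_indiscrete (C : Cat) (T : Type) (F G : Functor C (indiscrete T)) :
  fob F =1 fob G -> F = G.
Proof.
move=> FG; apply: eq_functor => -[a [b f]]; rewrite /farr /=.
by move: (fhom F f) (fhom G f); rewrite !FG => -[] [].
Qed.

Section FundamentalObjects.
Variables (X : SSet) (P : Cat) (eta : ToNerve X P).
Hypothesis eta_fund : fundamental eta.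

(* Into the indiscrete category on Prop, the constant functor [True] and
   "is the image of a vertex" both factor the same map, hence coincide. *)
Lemma fundamental_ob_surj (p : ob P) : exists x : sx X 0, fob (tn eta x) ord0 = p.
Proof.
pose reached q := exists x : sx X 0, fob (tn eta x) ord0 = q.
have triv_nat m n (d : Dhom m n) (x : sx X n) :
    to_indiscrete (fun=> True) = Fcomp (to_indiscrete (fun=> True)) (ordfun d).
  exact: eq_to_indiscrete.
have [F [_ F_unique]] := eta_fund (MkToNerve triv_nat).
have F_true : F = to_indiscrete (fun=> True).
  by apply: F_unique => n x; apply: eq_to_indiscrete.
have F_reached : F = to_indiscrete reached.
  apply: F_unique => n x; apply: eq_to_indiscrete => i /=.
  apply: propositional_extensionality; split=> // _.
  by exists (sact (vertex_map i) x); rewrite (tn_nat eta).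
suff : reached p by [].
by have /= -> := f_equal (fun G => fob G p) (etrans (esym F_reached) F_true).
Qed.

(* The vertices of a simplex of X form a functor into the indiscrete category
   on X_0; its factorization through [eta] is a retraction of the vertex map. *)
Lemma fundamental_vertex_inj : injective (fun x : sx X 0 => fob (tn eta x) ord0).
Proof.
have vertices_nat m n (d : Dhom m n) (x : sx X n) :
    @to_indiscrete (ordcat m) _ (fun i => sact (vertex_map i) (sact d x)) =
    Fcomp (@to_indiscrete (ordcat n) _ (fun i => sact (vertex_map i) x)) (ordfun d).
  by apply: eq_to_indiscrete => i /=; rewrite -sact_comp; congr sact; apply: eq_Dhom.
have [F [etaF _]] := eta_fund (MkToNerve vertices_nat).
have retract (x : sx X 0) : fob F (fob (tn eta x) ord0) = x.
  have /= <- := f_equal (fob ^~ (ord0 : ob (ordcat 0))) (etaF 0 x).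
  by rewrite [vertex_map _]Dhom00 sact_id.
by move=> x y /(congr1 (fob F)); rewrite !retract.
Qed.

End FundamentalObjects.

Definition sset1 : SSet.
Proof. by refine (@MkSSet (fun=> unit) (fun _ _ _ _ => tt) _ _) => // ? []. Defined.

Lemma mono_vertex_inj (X Y : SSet) (g : SSetMor X Y) :
  mono g -> injective (fun x : sx X 0 => smap g x).
Proof.
move=> g_mono x y gxy.
have const_nat (z : sx X 0) m n (d : Dhom m n) (_ : sx sset1 n) :
    sact (const_map m) z = sact d (sact (const_map n) z).
  by rewrite -sact_comp; congr sact; apply: eq_Dhom.
have const_xy : MkSSetMor (const_nat x) = MkSSetMor (const_nat y).
  by apply: g_mono; apply: eq_ssetmor => n _ /=; rewrite !snat gxy.
have /= := congr1 (fun h => smap h (tt : sx sset1 0)) const_xy.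
by rewrite [const_map 0]Dhom00 !sact_id.
Qed.

Lemma arrow_iso_refl (A B : Cat) (f : Functor A B) : arrow_iso f f.
Proof.
by exists (Fid A), (Fid B), (Fid A), (Fid B); split; try split; apply: eq_functor => -[x [y a]].
Qed.

Lemma arrow_iso_injective_ob (A B C D : Cat) (f : Functor A B) (h : Functor C D) :
  arrow_iso f h -> injective (fob h) -> injective (fob f).
Proof.
case=> u [v [u' [_ [vf_hu _ [u'u _] _]]]] h_inj a b fab.
have hu c : fob h (fob u c) = fob v (fob f c) := congr1 (fob ^~ c) (esym vf_hu).
have u'uK c : fob u' (fob u c) = c := congr1 (fob ^~ c) u'u.
by rewrite -(u'uK a) -(u'uK b) (h_inj (fob u a) (fob u b)) // !hu fab.
Qed.

Lemma fundamental_mono_injective_ob (X Y : SSet) (g : SSetMor X Y) (PX PY : Cat)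
    (etaX : ToNerve X PX) (etaY : ToNerve Y PY) (h : Functor PX PY) :
  fundamental etaX -> fundamental etaY -> mono g ->
  (forall n (x : sx X n), Fcomp h (tn etaX x) = tn etaY (smap g x)) ->
  injective (fob h).
Proof.
move=> etaX_fund etaY_fund g_mono h_g p q.
have [x <-] := fundamental_ob_surj etaX_fund p.
have [y <-] := fundamental_ob_surj etaX_fund q.
move=> hxy; suff -> : x = y by [].
apply: (mono_vertex_inj g_mono); apply: (fundamental_vertex_inj etaY_fund) => /=.
by rewrite -!h_g.
Qed.

Section Extension.
Variables (A B : Cat) (f : Functor A B).

(* Identities get two labels, [inl a] and [inr (id_arr a)], so that
   [label_map] is injective without deciding which arrows are identities. *)
Definition arr_label (e : ob A + Arr A) : Arr A :=
  match e with inl a => id_arr a | inr m => m end.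

Definition ext_label (e : Arr B + Arr A) : Arr B :=
  match e with inl m => m | inr m => farr f m end.

Definition label_map (e : ob A + Arr A) : Arr B + Arr A :=
  match e with inl a => inl (id_arr (fob f a)) | inr m => inr m end.

Definition lnerve_cat : SSet := lnerve inl arr_label.
Definition lnerve_ext : SSet := lnerve (fun b => inl (id_arr b)) ext_label.

Lemma ext_label_map (e : ob A + Arr A) : ext_label (label_map e) = farr f (arr_label e).
Proof. by case: e => //= a; rewrite farr_id_arr. Qed.

Definition lnerve_incl : SSetMor lnerve_cat lnerve_ext :=
  @lnerve_map _ _ f _ _ inl _ _ _ label_map (fun=> erefl) ext_label_map.

Lemma label_map_inj : injective (fob f) -> injective label_map.
Proof. by move=> f_inj [a|m] [a'|m'] //= [] => [/f_inj|] ->. Qed.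

Definition lnerve_cat_unit : ToNerve lnerve_cat A :=
  @lnerve_unit _ _ inl arr_label (fun=> erefl).
Definition lnerve_ext_unit : ToNerve lnerve_ext B :=
  @lnerve_unit _ _ (fun b => inl (id_arr b)) ext_label (fun=> erefl).

Lemma lnerve_cat_fundamental : fundamental lnerve_cat_unit.
Proof. by apply: (@lnerve_fundamental _ _ _ _ _ inr). Qed.

Lemma lnerve_ext_fundamental : fundamental lnerve_ext_unit.
Proof. by apply: (@lnerve_fundamental _ _ _ _ _ inl). Qed.

Lemma lnerve_incl_unit (n : nat) (x : sx lnerve_cat n) :
  Fcomp f (tn lnerve_cat_unit x) = tn lnerve_ext_unit (smap lnerve_incl x).
Proof. exact: lnerve_map_unit. Qed.

End Extension.

Theorem lemma2p4 (A B : Cat) (f : Functor A B) :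
  injective (fob f) <->
  exists (X Y : SSet) (g : SSetMor X Y),
    mono g /\
    exists (PX PY : Cat) (etaX : ToNerve X PX) (etaY : ToNerve Y PY)
           (h : Functor PX PY),
      [/\ fundamental etaX, fundamental etaY,
          (forall n (x : sx X n), Fcomp h (tn etaX x) = tn etaY (smap g x)) &
          arrow_iso f h].
Proof.
split=> [f_inj | [X [Y [g [g_mono [PX [PY [etaX [etaY [h [etaX_fund etaY_fund h_g fh]]]]]]]]]]].
- exists (lnerve_cat A), (lnerve_ext f), (lnerve_incl f).
  split; first exact/lnerve_map_mono/label_map_inj.
  exists A, B, (lnerve_cat_unit A), (lnerve_ext_unit f), f; split.
  + exact: lnerve_cat_fundamental.
  + exact: lnerve_ext_fundamental.
  + exact: lnerve_incl_unit.
  + exact: arrow_iso_refl.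
- apply: arrow_iso_injective_ob fh _.
  exact: fundamental_mono_injective_ob etaX_fund etaY_fund g_mono h_g.
Qed.
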